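(* Let $G$ be a finitely generated discrete group (considered as a zero-dimensional Stein group). Then for every continuous seminorm $q:\mathcal O_{\exp}(G)\to\mathbb R_+$ and every semicharacter $f:G\to[1,+\infty)$ one has $\sum_{x\in G}f(x)\,q(1_x)<\infty$.
   Context: For discrete $G$ every function is holomorphic. A semicharacter is a function $f:G\to[1,\infty)$ with $f(xy)\le f(x)f(y)$. $\mathcal O_{\exp}(G)$ is the set of functions $u:G\to\mathbb C$ with $|u|\le f$ for some semicharacter $f$; for each semicharacter $f$, $f^{\blacksquare}=\{u:|u|\le f\}$ is compact in the topology of pointwise convergence, $\mathbb Cf^{\blacksquare}=\bigcup_\lambda\lambda f^{\blacksquare}$ gets the topology in which a set is closed iff it meets every $\lambda f^{\blacksquare}$ in a pointwise-closed set, and $\mathcal O_{\exp}(G)$ carries the locally convex inductive limit topology of these spaces. $1_x$ denotes the characteristic function of $\{x\}$. *)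

From Stdlib Require Import Reals List ClassicalEpsilon.
From Coquelicot Require Import Coquelicot.
Import ListNotations.
Open Scope R_scope.

Record Group := {
  carrier :> Type;
  gmul : carrier -> carrier -> carrier;
  gone : carrier;
  ginv : carrier -> carrier;
  gmul_assoc : forall x y z, gmul x (gmul y z) = gmul (gmul x y) z;
  gmul_1l : forall x, gmul gone x = x;
  gmul_Vl : forall x, gmul (ginv x) x = gone
}.

Definition finitely_generated (G : Group) : Prop :=
  exists gens : list (carrier G), forall x : G,
    exists w : list (bool * carrier G),
      (forall p : bool * carrier G, In p w -> In (snd p) gens) /\
      x = fold_right (fun (p : bool * carrier G) (acc : carrier G) => gmul G (if fst p then snd p else ginv G (snd p)) acc)
                     (gone G) w.

Definition semicharacter (G : Group) (f : G -> R) : Prop :=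
  (forall x, 1 <= f x) /\ (forall x y, f (gmul G x y) <= f x * f y).

(* the set  r f^{box} = { u : |u| <= r f }  (for r >= 0 this is lambda f^box, |lambda| = r) *)
Definition box (G : Group) (f : G -> R) (r : R) (u : G -> C) : Prop :=
  forall x, Cmod (u x) <= r * f x.

Definition Oexp (G : Group) (u : G -> C) : Prop :=
  exists f, semicharacter G f /\ box G f 1 u.

Definition indic (G : Group) (x : G) : G -> C :=
  fun y => if excluded_middle_informative (y = x) then RtoC 1 else RtoC 0.

Definition seminorm_Oexp (G : Group) (q : (G -> C) -> R) : Prop :=
  (forall u, Oexp G u -> 0 <= q u) /\
  (forall u v, Oexp G u -> Oexp G v -> q (fun x => Cplus (u x) (v x)) <= q u + q v) /\
  (forall (c : C) u, Oexp G u -> q (fun x => Cmult c (u x)) = Cmod c * q u).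

(* Continuity of q restricted to the box r f^{box}, for the topology of
   pointwise convergence (product topology on C^G), written out with the
   standard basic neighbourhoods (finitely many coordinates). *)
Definition pointwise_continuous_on (G : Group) (K : (G -> C) -> Prop)
    (q : (G -> C) -> R) : Prop :=
  forall u, K u -> forall eps, 0 < eps ->
    exists (F : list G) (delta : R), 0 < delta /\
      forall v, K v -> (forall x, In x F -> Cmod (Cminus (v x) (u x)) < delta) ->
        Rabs (q v - q u) < eps.

(* A seminorm q on O_exp(G) is continuous for the locally convex inductive
   limit topology iff for every semicharacter f, its restriction to C f^{box}
   is continuous, i.e. (by definition of the topology on C f^{box}) iff its
   restriction to every lambda f^{box} is continuous for pointwise convergence. *)
Definition continuous_seminorm_Oexp (G : Group) (q : (G -> C) -> R) : Prop :=
  seminorm_Oexp G q /\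
  forall f, semicharacter G f -> forall r, 0 <= r ->
    pointwise_continuous_on G (box G f r) q.

Definition lsum {A : Type} (g : A -> R) (l : list A) : R :=
  fold_right (fun a s => g a + s) 0 l.

(* A finitely generated group admits an injective code c : G -> nat with
   c(xy) + 1 <= K (c x + 1)(c y + 1): code an element by the least base-m
   numeral of a word in the generators representing it.  Hence h x := ((K + 2)(c x + 1))^2 is a
   semicharacter with sum_x 1/h x <= sum_n 1/((n+1)(n+2)) = 1.  Continuity of q
   at 0 on the unit box of the semicharacter f h gives a finite F outside of
   which the functions f(x) h(x) 1_x lie near 0, so f(x) h(x) q(1_x) is bounded;
   dividing by h x yields the summability of f(x) q(1_x). *)
From Stdlib Require Import Reals List.
From Coquelicot Require Import Coquelicot.
From Stdlib Require Import Wf_nat Lia Lra FunctionalExtensionality Classical ClassicalEpsilon.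
Open Scope R_scope.

Lemma lsum_app {A} (g : A -> R) l1 l2 : lsum g (l1 ++ l2) = lsum g l1 + lsum g l2.
Proof. induction l1 as [|a l1 IH]; simpl; [ring | rewrite IH; ring]. Qed.

Lemma lsum_le {A} (g1 g2 : A -> R) l :
  (forall x, g1 x <= g2 x) -> lsum g1 l <= lsum g2 l.
Proof. intros H; induction l as [|a l IH]; simpl; [lra | specialize (H a); lra]. Qed.

Lemma lsum_mult_l {A} (g : A -> R) c l : lsum (fun x => c * g x) l = c * lsum g l.
Proof. induction l as [|a l IH]; simpl; [ring | rewrite IH; ring]. Qed.

Lemma lsum_map {A B} (g : B -> R) (c : A -> B) l :
  lsum (fun x => g (c x)) l = lsum g (map c l).
Proof. induction l as [|a l IH]; simpl; [reflexivity | now rewrite IH]. Qed.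

Lemma lsum_nonneg {A} (g : A -> R) l : (forall x, 0 <= g x) -> 0 <= lsum g l.
Proof. intros H; induction l as [|a l IH]; simpl; [lra | specialize (H a); lra]. Qed.

Lemma lsum_In_le {A} (g : A -> R) l x :
  (forall y, 0 <= g y) -> In x l -> g x <= lsum g l.
Proof.
  intros H Hx; induction l as [|a l IH]; simpl in *; [contradiction |].
  pose proof (H a). pose proof (lsum_nonneg g l H).
  destruct Hx as [<- | Hx]; [lra | specialize (IH Hx); lra].
Qed.

Lemma lsum_NoDup_le_seq (g : nat -> R) :
  (forall n, 0 <= g n) ->
  forall N L, NoDup L -> (forall n, In n L -> (n < N)%nat) ->
  lsum g L <= lsum g (seq 0 N).
Proof.
  intros Hg; induction N as [|N IH]; intros L HL Hb.
  - destruct L as [|a L]; simpl; [lra |].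
    specialize (Hb a (or_introl eq_refl)); lia.
  - rewrite seq_S, lsum_app; simpl. pose proof (Hg N).
    destruct (in_dec Nat.eq_dec N L) as [Hin | Hnin].
    + destruct (in_split _ _ Hin) as (l1 & l2 & ->).
      assert (Hrest : lsum g (l1 ++ l2) <= lsum g (seq 0 N)).
      { apply IH; [eapply NoDup_remove_1; eauto |].
        intros n Hn.
        assert (n <> N) by (intros ->; eapply NoDup_remove_2; eauto).
        assert (n < S N)%nat; [| lia].
        apply Hb, in_or_app; apply in_app_or in Hn; simpl; tauto. }
      rewrite lsum_app in *; simpl; lra.
    + assert (lsum g L <= lsum g (seq 0 N)); [| lra].
      apply IH; auto. intros n Hn.
      assert (n <> N) by (intros ->; contradiction).
      specialize (Hb n Hn); lia.
Qed.

Definition phi (n : nat) : R := / ((INR n + 1) * (INR n + 2)).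

Lemma phi_nonneg n : 0 <= phi n.
Proof. pose proof (pos_INR n). apply Rlt_le, Rinv_0_lt_compat; nra. Qed.

Lemma lsum_phi_seq N : lsum phi (seq 0 N) = 1 - / (INR N + 1).
Proof.
  induction N as [|N IH]; [simpl; rewrite Rplus_0_l, Rinv_1; ring |].
  rewrite seq_S, lsum_app, IH; cbn [lsum fold_right Nat.add]; unfold phi.
  rewrite S_INR. pose proof (pos_INR N). field; lra.
Qed.

Lemma lsum_phi_NoDup L : NoDup L -> lsum phi L <= 1.
Proof.
  intros HL.
  assert (Hb : forall n, In n L -> (n < S (list_max L))%nat).
  { intros n Hn. pose proof (proj1 (list_max_le L _) (le_n _)) as Hmax.
    rewrite Forall_forall in Hmax. specialize (Hmax n Hn); lia. }
  pose proof (lsum_NoDup_le_seq phi phi_nonneg _ L HL Hb) as H.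
  rewrite lsum_phi_seq in H.
  assert (0 < / (INR (S (list_max L)) + 1))
    by (pose proof (pos_INR (S (list_max L))); apply Rinv_0_lt_compat; lra).
  lra.
Qed.

(* Bijective base-m numerals: the digit r is stored as r + 1, so no word has
   the same code as a longer one. *)
Fixpoint enc (m : nat) (w : list nat) : nat :=
  match w with nil => O | r :: w' => S (r + m * enc m w') end.

Lemma enc_inj m : forall w1 w2,
  List.Forall (fun r => (r < m)%nat) w1 -> List.Forall (fun r => (r < m)%nat) w2 ->
  enc m w1 = enc m w2 -> w1 = w2.
Proof.
  induction w1 as [|r1 w1 IH]; intros [|r2 w2] H1 H2 He; simpl in He; try lia;
    [reflexivity |].
  inversion H1; inversion H2; subst.
  destruct (Nat.div_mod_unique m (enc m w1) (enc m w2) r1 r2) as [Hq ->];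
    [assumption | assumption | lia |].
  f_equal; auto.
Qed.

Lemma enc_app m w1 w2 : enc m (w1 ++ w2) = (enc m w1 + m ^ length w1 * enc m w2)%nat.
Proof. induction w1 as [|r w1 IH]; simpl; [lia | rewrite IH; ring]. Qed.

Lemma pow_length_le_enc m w : (m ^ length w <= m * enc m w + 1)%nat.
Proof. induction w as [|r w IH]; simpl; nia. Qed.

Lemma enc_app_le m w1 w2 :
  (enc m (w1 ++ w2) + 1 <= (m + 1) * (enc m w1 + 1) * (enc m w2 + 1))%nat.
Proof.
  rewrite enc_app. pose proof (pow_length_le_enc m w1) as H.
  pose proof (Nat.mul_le_mono_r _ _ (enc m w2) H). nia.
Qed.

Section Words.

Variable G : Group.
Variable alphabet : list G.

Definition weval (w : list nat) : G :=
  fold_right (fun r acc => gmul G (nth r alphabet (gone G)) acc) (gone G) w.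

Lemma weval_app w1 w2 : weval (w1 ++ w2) = gmul G (weval w1) (weval w2).
Proof.
  induction w1 as [|r w1 IH]; simpl; [now rewrite gmul_1l | now rewrite IH, gmul_assoc].
Qed.

Definition word_code (x : G) (n : nat) : Prop :=
  exists w, List.Forall (fun r => (r < length alphabet)%nat) w /\
    enc (length alphabet) w = n /\ weval w = x.

Hypothesis word_code_total : forall x, exists n, word_code x n.

Lemma least_word_code x :
  exists n, word_code x n /\ forall k, word_code x k -> (n <= k)%nat.
Proof.
  destruct (dec_inh_nat_subset_has_unique_least_element
              (word_code x) (fun n => classic _) (word_code_total x)) as [n [Hn _]].
  now exists n.
Qed.

Definition least_code (x : G) : nat :=
  proj1_sig (constructive_indefinite_description _ (least_word_code x)).

Lemma least_code_spec x :
  word_code x (least_code x) /\ forall n, word_code x n -> (least_code x <= n)%nat.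
Proof. exact (proj2_sig (constructive_indefinite_description _ (least_word_code x))). Qed.

Lemma least_code_inj x y : least_code x = least_code y -> x = y.
Proof.
  intros Hxy.
  destruct (proj1 (least_code_spec x)) as (wx & Dx & Ex & <-).
  destruct (proj1 (least_code_spec y)) as (wy & Dy & Ey & <-).
  f_equal; apply (enc_inj (length alphabet)); [exact Dx | exact Dy | congruence].
Qed.

Lemma least_code_mul x y :
  (least_code (gmul G x y) + 1
     <= (length alphabet + 1) * (least_code x + 1) * (least_code y + 1))%nat.
Proof.
  destruct (proj1 (least_code_spec x)) as (wx & Dx & <- & <-).
  destruct (proj1 (least_code_spec y)) as (wy & Dy & <- & <-).
  assert (Hle : (least_code (gmul G (weval wx) (weval wy))
                   <= enc (length alphabet) (wx ++ wy))%nat).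
  { apply least_code_spec. exists (wx ++ wy).
    split; [now apply Forall_app | split; [reflexivity | apply weval_app]]. }
  pose proof (enc_app_le (length alphabet) wx wy); lia.
Qed.

End Words.

Lemma finitely_generated_code (G : Group) : finitely_generated G ->
  exists (K : nat) (c : G -> nat), (forall x y, c x = c y -> x = y) /\
    forall x y, (c (gmul G x y) + 1 <= K * (c x + 1) * (c y + 1))%nat.
Proof.
  intros [gens Hgens].
  set (alphabet := gens ++ map (ginv G) gens).
  assert (Htotal : forall x, exists n, word_code G alphabet x n).
  { intros x. destruct (Hgens x) as [w [Hw ->]]. clear Hgens.
    induction w as [|[b g] w IH]; simpl.
    - exists O, nil; repeat split; constructor.
    - destruct IH as (n & w' & Dw' & _ & Ew'); [intros; apply Hw; simpl; auto |].
      assert (Hg : In g gens) by exact (Hw (b, g) (or_introl eq_refl)).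
      assert (Hletter : In (if b then g else ginv G g) alphabet).
      { apply in_or_app; destruct b; [left; exact Hg | right; now apply in_map]. }
      destruct (In_nth _ _ (gone G) Hletter) as (i & Hi & Hnth).
      exists (enc (length alphabet) (i :: w')), (i :: w').
      repeat split; [now constructor |]. simpl; now rewrite Hnth, Ew'. }
  exists (length alphabet + 1)%nat, (least_code G alphabet Htotal).
  split; [apply least_code_inj | apply least_code_mul].
Qed.

Lemma semicharacter_mult (G : Group) (f h : G -> R) :
  semicharacter G f -> semicharacter G h -> semicharacter G (fun x => f x * h x).
Proof.
  intros [f1 fmul] [h1 hmul]. split.
  - intros x. pose proof (f1 x). pose proof (h1 x). nra.
  - intros x y.
    pose proof (f1 (gmul G x y)). pose proof (h1 (gmul G x y)).
    pose proof (f1 x). pose proof (f1 y). pose proof (h1 x). pose proof (h1 y).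
    pose proof (fmul x y). pose proof (hmul x y).
    assert (f (gmul G x y) * h (gmul G x y) <= (f x * f y) * (h x * h y))
      by (apply Rmult_le_compat; lra).
    lra.
Qed.

Lemma finitely_generated_summable_semicharacter (G : Group) : finitely_generated G ->
  exists h, semicharacter G h /\
    forall l : list G, NoDup l -> lsum (fun x => / h x) l <= 1.
Proof.
  intros hG. destruct (finitely_generated_code G hG) as (K & c & c_inj & c_mul).
  set (a := fun x => ((K + 2) * (c x + 1))%nat).
  assert (a_mul : forall x y, (a (gmul G x y) <= a x * a y)%nat)
    by (intros x y; specialize (c_mul x y); unfold a; nia).
  exists (fun x => INR (a x * a x)). split; [split |].
  - intros x. rewrite <- INR_1. apply le_INR. unfold a; nia.
  - intros x y. rewrite <- mult_INR. apply le_INR.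
    specialize (a_mul x y). nia.
  - intros l Hl. apply Rle_trans with (lsum (fun x => phi (c x)) l).
    + apply lsum_le. intros x. unfold phi. pose proof (pos_INR (c x)).
      apply Rinv_le_contravar; [nra |].
      replace ((INR (c x) + 1) * (INR (c x) + 2)) with (INR ((c x + 1) * (c x + 2)))
        by (rewrite mult_INR, !plus_INR; simpl; ring).
      apply le_INR. unfold a; nia.
    + rewrite lsum_map. apply lsum_phi_NoDup, NoDup_map_NoDup_ForallPairs; [| exact Hl].
      intros x y _ _; apply c_inj.
Qed.

Lemma Oexp_indic (G : Group) (x : G) : Oexp G (indic G x).
Proof.
  exists (fun _ => 1). split; [split; intros; lra |].
  intros y. unfold indic. destruct (excluded_middle_informative (y = x));
    rewrite Cmod_R; [rewrite Rabs_R1 | rewrite Rabs_R0]; lra.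
Qed.

Lemma seminorm_Oexp_zero (G : Group) (q : (G -> C) -> R) :
  seminorm_Oexp G q -> q (fun _ => RtoC 0) = 0.
Proof.
  intros (_ & _ & q_scal).
  assert (Hzero : Oexp G (fun _ => RtoC 0)).
  { exists (fun _ => 1). split; [split; intros; lra |].
    intros x. rewrite Cmod_0; lra. }
  pose proof (q_scal (RtoC 0) _ Hzero) as H.
  rewrite Cmod_0, Rmult_0_l in H.
  replace (fun _ : G => RtoC 0) with (fun _ : G => Cmult (RtoC 0) (RtoC 0))
    by (apply functional_extensionality; intros; apply Cmult_0_l).
  exact H.
Qed.

(* The functions f(x) 1_x with x outside F lie in the unit box of f and
   vanish on F, so continuity at 0 bounds q on them. *)
Lemma continuous_seminorm_indic_bound (G : Group) (q : (G -> C) -> R) (f : G -> R) :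
  continuous_seminorm_Oexp G q -> semicharacter G f ->
  exists B, 0 <= B /\ forall x, f x * q (indic G x) <= B.
Proof.
  intros [hq hcont] hf. destruct hf as [f1 fmul].
  destruct (hcont f (conj f1 fmul) 1 Rle_0_1 (fun _ => RtoC 0)) with (eps := 1)
    as (F & delta & hdelta & Hnear); [intros x; rewrite Cmod_0; specialize (f1 x); lra | lra |].
  assert (Hout : forall x, ~ In x F -> f x * q (indic G x) < 1).
  { intros x Hx. set (v := fun y => Cmult (RtoC (f x)) (indic G x y)).
    assert (Hv_box : box G f 1 v).
    { intros y. unfold v, indic. rewrite Cmod_mult, !Cmod_R.
      pose proof (f1 x). pose proof (f1 y). rewrite (Rabs_pos_eq (f x)) by lra.
      destruct (excluded_middle_informative (y = x)) as [-> | _];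
        [rewrite Cmod_R, Rabs_R1 | rewrite Cmod_R, Rabs_R0]; lra. }
    assert (Hv_near : forall y, In y F -> Cmod (Cminus (v y) (RtoC 0)) < delta).
    { intros y Hy. unfold v, indic.
      destruct (excluded_middle_informative (y = x)) as [-> | _]; [contradiction |].
      replace (Cminus (Cmult (RtoC (f x)) (RtoC 0)) (RtoC 0)) with (RtoC 0) by ring.
      rewrite Cmod_0; exact hdelta. }
    specialize (Hnear v Hv_box Hv_near).
    rewrite (seminorm_Oexp_zero G q hq), Rminus_0_r in Hnear.
    destruct hq as (q_nonneg & _ & q_scal).
    unfold v in Hnear. rewrite q_scal, Cmod_R in Hnear by apply Oexp_indic.
    pose proof (f1 x). pose proof (q_nonneg _ (Oexp_indic G x)).
    rewrite (Rabs_pos_eq (f x)), Rabs_pos_eq in Hnear by nra; exact Hnear. }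
  set (g := fun y => Rabs (f y * q (indic G y))).
  assert (g_nonneg : forall y, 0 <= g y) by (intros; apply Rabs_pos).
  exists (1 + lsum g F). split; [pose proof (lsum_nonneg g F g_nonneg); lra |].
  intros x. pose proof (lsum_nonneg g F g_nonneg).
  destruct (classic (In x F)) as [Hx | Hx].
  - pose proof (lsum_In_le g F x g_nonneg Hx). pose proof (Rle_abs (f x * q (indic G x))).
    unfold g in *; lra.
  - specialize (Hout x Hx); lra.
Qed.

Theorem mainTheorem12 (G : Group) (hG : finitely_generated G)
    (q : (G -> C) -> R) (hq : continuous_seminorm_Oexp G q)
    (f : G -> R) (hf : semicharacter G f) :
  exists B : R, forall l : list G, NoDup l ->
    lsum (fun x => f x * q (indic G x)) l <= B.
Proof.
  destruct (finitely_generated_summable_semicharacter G hG) as (h & hh & h_summable).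
  destruct (continuous_seminorm_indic_bound G q (fun x => f x * h x) hq
              (semicharacter_mult G f h hf hh)) as (B & B_nonneg & HB).
  exists B. intros l Hl.
  apply Rle_trans with (lsum (fun x => B * / h x) l).
  - apply lsum_le. intros x. pose proof (proj1 hh x).
    replace (f x * q (indic G x)) with (f x * h x * q (indic G x) * / h x) by (field; lra).
    apply Rmult_le_compat_r; [apply Rlt_le, Rinv_0_lt_compat; lra | apply HB].
  - rewrite lsum_mult_l. specialize (h_summable l Hl). nra.
Qed.
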